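(* Let $\mathcal T_p$ be a Tarski monster, $X$ a finite generating system of $\mathcal T_p$, $\mathcal K$ a proper non-trivial subgroup and $\Gamma=\mathrm{Sch}(\mathcal T_p,\mathcal K,X)$. Then the group $\mathrm{Aut}_X(\Gamma)$ of label-preserving automorphisms of $\Gamma$ is trivial and each orbit of $\mathrm{Aut}(\Gamma)$ on vertices is finite. In particular, $\Gamma$ is not almost transitive, and Tarski monsters are strongly simple.
   Context: For a prime $p$, a Tarski monster $\mathcal T_p$ is an infinite group every proper non-trivial subgroup of which is cyclic of order $p$. The Schreier graph $\mathrm{Sch}(\mathcal A,\mathcal K,X)$ has vertices the right cosets $\mathcal Kg$ and, for each coset and each $x$ with $x\in X$ or $x^{-1}\in X$, an edge labeled $x$ from $\mathcal Kg$ to $\mathcal Kgx$ whose inverse is the edge labeled $x^{-1}$ from $\mathcal Kgx$. $\mathrm{Aut}(\Gamma)$ is the group of all graph automorphisms (ignoring labels). A graph is almost transitive if there is a finite set $V_0$ of vertices such that every vertex can be mapped into $V_0$ by an automorphism. A finitely generated group $\mathcal A$ is strongly simple if for every generating system $X$ of size at most $\mathrm{rank}(\mathcal A)+1$ (rank = minimal number of generators) and every proper non-trivial subgroup $\mathcal H$, $\mathrm{Sch}(\mathcal A,\mathcal H,X)$ is not vertex-transitive. *)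

From Stdlib Require Import Arith List ZArith Znumtheory
  FunctionalExtensionality PropExtensionality.
Import ListNotations.
Set Implicit Arguments.

Record group := Group {
  gcar :> Type;
  gmul : gcar -> gcar -> gcar;
  gone : gcar;
  ginv : gcar -> gcar;
  gassoc : forall a b c, gmul a (gmul b c) = gmul (gmul a b) c;
  gmul1l : forall a, gmul gone a = a;
  gmul1r : forall a, gmul a gone = a;
  gmulVl : forall a, gmul (ginv a) a = gone;
  gmulVr : forall a, gmul a (ginv a) = gone }.

Section GroupDefs.
Variable G : group.

Fixpoint gpow (g : G) (n : nat) : G :=
  match n with O => gone G | S m => gmul G (gpow g m) g end.

Definition subgroup (H : G -> Prop) : Prop :=
  H (gone G) /\ (forall a b, H a -> H b -> H (gmul G a b)) /\
  (forall a, H a -> H (ginv G a)).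

Definition proper_sub (H : G -> Prop) : Prop := exists g, ~ H g.
Definition nontrivial_sub (H : G -> Prop) : Prop := exists h, H h /\ h <> gone G.

Definition cyclic_of_order (H : G -> Prop) (p : nat) : Prop :=
  exists g, (forall h, H h <-> exists n, h = gpow g n) /\
            gpow g p = gone G /\
            (forall k : nat, (0 < k < p)%nat -> gpow g k <> gone G).

Definition infinite_group : Prop := ~ exists l : list G, forall g, In g l.

Definition tarski_monster (p : nat) : Prop :=
  prime (Z.of_nat p) /\ infinite_group /\
  forall H, subgroup H -> proper_sub H -> nontrivial_sub H -> cyclic_of_order H p.

Definition generates (X : list G) : Prop :=
  forall H, subgroup H -> (forall x, In x X -> H x) -> forall g, H g.

Definition finitely_generated : Prop := exists X, generates X.

Definition is_rank (r : nat) : Prop :=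
  (exists X, generates X /\ length X = r) /\
  (forall X, generates X -> (r <= length X)%nat).

Lemma ginv_inv (x : G) : ginv G (ginv G x) = x.
Proof.
  rewrite <- (gmul1r G (ginv G (ginv G x))), <- (gmulVl G x), gassoc,
    gmulVl, gmul1l; reflexivity.
Qed.

Variable K : G -> Prop.

Definition rcoset (g : G) : G -> Prop := fun y => exists k, K k /\ y = gmul G k g.

Definition SchV : Type := { S : G -> Prop | exists g, S = rcoset g }.

Definition vset (v : SchV) (s : G) : G -> Prop :=
  fun y => exists z, proj1_sig v z /\ y = gmul G z s.

Lemma vset_coset (v : SchV) (s : G) : exists g, vset v s = rcoset g.
Proof.
  destruct v as [S [g ->]]; exists (gmul G g s); simpl.
  apply functional_extensionality; intro y; apply propositional_extensionality.
  unfold vset, rcoset; simpl; split.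
  - intros [z [[k [Hk ->]] ->]]; exists k; split; auto; now rewrite gassoc.
  - intros [k [Hk ->]]; exists (gmul G k g); split; [exists k; auto|].
    now rewrite gassoc.
Qed.

Definition vact (v : SchV) (s : G) : SchV := exist _ (vset v s) (vset_coset v s).

Variable X : list G.

Definition is_label (x : G) : Prop := In x X \/ In (ginv G x) X.
Definition Label : Type := { x : G | is_label x }.

Lemma is_label_inv (x : G) : is_label x -> is_label (ginv G x).
Proof. unfold is_label; rewrite ginv_inv; tauto. Qed.

Definition SchE : Type := (SchV * Label)%type.

Definition e_org (e : SchE) : SchV := fst e.
Definition e_ter (e : SchE) : SchV := vact (fst e) (proj1_sig (snd e)).
Definition e_label (e : SchE) : G := proj1_sig (snd e).
Definition e_inv (e : SchE) : SchE :=
  (e_ter e, exist _ (ginv G (proj1_sig (snd e))) (is_label_inv (proj2_sig (snd e)))).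

Definition bijective {A : Type} (f : A -> A) : Prop :=
  exists g : A -> A, (forall a, g (f a) = a) /\ (forall a, f (g a) = a).

Definition is_aut (fV : SchV -> SchV) (fE : SchE -> SchE) : Prop :=
  bijective fV /\ bijective fE /\
  forall e, e_org (fE e) = fV (e_org e) /\ e_ter (fE e) = fV (e_ter e) /\
            fE (e_inv e) = e_inv (fE e).

Definition label_preserving (fE : SchE -> SchE) : Prop :=
  forall e, e_label (fE e) = e_label e.

Definition vertex_transitive : Prop :=
  forall u v : SchV, exists fV fE, is_aut fV fE /\ fV u = v.

Definition almost_transitive : Prop :=
  exists V0 : list SchV, forall v, exists fV fE, is_aut fV fE /\ In (fV v) V0.

Definition aut_orbit_finite (v : SchV) : Prop :=
  exists l : list SchV, forall fV fE, is_aut fV fE -> In (fV v) l.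

End GroupDefs.

Arguments SchV {G} K.
Arguments SchE {G} K X.

Definition strongly_simple (G : group) : Prop :=
  finitely_generated G /\
  forall r, is_rank G r ->
  forall X : list G, NoDup X -> generates G X -> (length X <= r + 1)%nat ->
  forall H, subgroup G H -> proper_sub G H -> nontrivial_sub G H ->
  ~ @vertex_transitive G H X.

From Stdlib Require Import List Arith Lia ZArith Znumtheory FinFun
  Classical ClassicalEpsilon ProofIrrelevance FunctionalExtensionality PropExtensionality.
Import ListNotations.
Open Scope nat_scope.

(* Every element of the Tarski monster has order p: a cyclic subgroup is either
   proper, hence of order p, or the whole group, which would then be finite.
   A proper non-trivial subgroup K = <k> is self-normalising in a strong form:
   if c k c^-1 lies in K then c normalises K, and K<c> is a subgroup with at
   most p^2 elements, hence proper, hence cyclic of order p and equal to K.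
   Consequently a word w of non-trivial value labels a closed walk at no more
   than one coset Kg (those with g w g^-1 in K).
   A label-preserving automorphism sends the closed walk at K read by a word
   of value k in K to a closed walk with the same labels, so it fixes K and,
   the graph being connected, everything. A general automorphism maps the
   closed walks of length n at K injectively to closed walks at the image of
   K; the words of value 1 are closed everywhere, so by counting the image of
   K carries a closed walk of length n with non-trivial value, and there are
   finitely many such vertices. Finite orbits of an almost transitive action
   would leave finitely many cosets, each of size p, so the group would be
   finite. *)

Section GroupFacts.
Variable G : group.
Local Infix "**" := (gmul G) (at level 40, left associativity).
Local Notation e := (gone G).
Local Notation "x ^-1" := (ginv G x) (at level 2).

Lemma gmulVK (z x : G) : z ** x^-1 ** x = z.
Proof. now rewrite <- gassoc, gmulVl, gmul1r. Qed.

Lemma gmulKV (z x : G) : z ** x ** x^-1 = z.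
Proof. now rewrite <- gassoc, gmulVr, gmul1r. Qed.

Lemma ginv_unique (a b : G) : a ** b = e -> b = a^-1.
Proof.
  intro H. now rewrite <- (gmul1l G b), <- (gmulVl G a), <- gassoc, H, gmul1r.
Qed.

Lemma ginv_mul (a b : G) : (a ** b)^-1 = b^-1 ** a^-1.
Proof. symmetry; apply ginv_unique. now rewrite gassoc, gmulKV, gmulVr. Qed.

Lemma ginv_one : e^-1 = e.
Proof. symmetry; apply ginv_unique, gmul1l. Qed.

Lemma ginv_eq1 (x : G) : x^-1 = e -> x = e.
Proof. intro H. now rewrite <- (ginv_inv G x), H, ginv_one. Qed.

Lemma gconj_eq1 (c h : G) : c ** h ** c^-1 = e -> h = e.
Proof.
  intro E.
  assert (Hh : h = c^-1 ** (c ** h ** c^-1) ** c)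
    by now rewrite !gassoc, gmulVl, gmul1l, gmulVK.
  now rewrite Hh, E, gmul1r, gmulVl.
Qed.

Lemma gpow_1 (g : G) : gpow G g 1 = g.
Proof. apply gmul1l. Qed.

Lemma gpow_succ_l (g : G) n : gpow G g (S n) = g ** gpow G g n.
Proof.
  induction n as [|n IH]; [now simpl; rewrite gmul1l, gmul1r|].
  change (gpow G g (S n) ** g = g ** gpow G g (S n)).
  now rewrite IH at 1; rewrite <- gassoc.
Qed.

Lemma gpow_add (g : G) m n : gpow G g (m + n) = gpow G g m ** gpow G g n.
Proof.
  induction n as [|n IH]; [now simpl; rewrite Nat.add_0_r, gmul1r|].
  now rewrite Nat.add_succ_r; simpl; rewrite IH, gassoc.
Qed.

Lemma gpow_mul (g : G) m n : gpow G g (m * n) = gpow G (gpow G g m) n.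
Proof.
  induction n as [|n IH]; [now rewrite Nat.mul_0_r|].
  now rewrite Nat.mul_succ_r, gpow_add, IH.
Qed.

Lemma gpow_one n : gpow G e n = e.
Proof. induction n as [|n IH]; simpl; [|rewrite IH, gmul1l]; reflexivity. Qed.

Lemma gpow_mod (g : G) m n :
  m <> 0 -> gpow G g m = e -> gpow G g n = gpow G g (n mod m).
Proof.
  intros Hm H. rewrite (Nat.div_mod n m Hm) at 1.
  now rewrite gpow_add, gpow_mul, H, gpow_one, gmul1l.
Qed.

Lemma gpow_mod_listed (g : G) m n :
  m <> 0 -> gpow G g m = e -> In (gpow G g n) (map (gpow G g) (seq 0 m)).
Proof.
  intros Hm H. rewrite (gpow_mod g m n Hm H). apply in_map, in_seq.
  pose proof (Nat.mod_upper_bound n m Hm); lia.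
Qed.

Lemma gconj_pow (c h : G) n : c ** gpow G h n ** c^-1 = gpow G (c ** h ** c^-1) n.
Proof.
  induction n as [|n IH]; simpl; [now rewrite gmul1r, gmulVr|].
  now rewrite <- IH, !gassoc, gmulVK.
Qed.

Lemma ginv_pow (g : G) n : (gpow G g n)^-1 = gpow G (g^-1) n.
Proof.
  induction n as [|n IH]; simpl; [apply ginv_one|].
  now rewrite ginv_mul, IH, <- gpow_succ_l.
Qed.

Lemma ginv_as_pow (c : G) m : m <> 0 -> gpow G c m = e -> c^-1 = gpow G c (m - 1).
Proof.
  intros Hm H. symmetry; apply ginv_unique. rewrite <- gpow_succ_l.
  now replace (S (m - 1)) with m by lia.
Qed.

Lemma subgroup_pow (H : G -> Prop) g n : subgroup G H -> H g -> H (gpow G g n).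
Proof. intros [H1 [HM _]] Hg; induction n; simpl; auto. Qed.

Lemma infinite_not_listed (P : G -> Prop) (l : list G) :
  infinite_group G -> ~ proper_sub G P -> ~ (forall x, P x -> In x l).
Proof.
  intros Hinf Hnp Hl. apply Hinf. exists l. intro g. apply Hl.
  apply NNPP; intro Hg. apply Hnp; now exists g.
Qed.

Definition powers (b : G) : G -> Prop :=
  fun x => exists n, x = gpow G b n \/ x = gpow G (b^-1) n.

Lemma gpow_mul_inv_pow (b : G) n m : powers b (gpow G b n ** gpow G (b^-1) m).
Proof.
  revert m; induction n as [|n IH]; intro m.
  - exists m; right; apply gmul1l.
  - destruct m as [|m]; [exists (S n); left; apply gmul1r|].
    rewrite (gpow_succ_l (b^-1) m). change (gpow G b (S n)) with (gpow G b n ** b).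
    rewrite gassoc, gmulKV. apply IH.
Qed.

Lemma powers_subgroup b : subgroup G (powers b).
Proof.
  split; [|split].
  - exists 0; now left.
  - intros x y [n [-> | ->]] [m [-> | ->]].
    + exists (n + m); left; symmetry; apply gpow_add.
    + apply gpow_mul_inv_pow.
    + destruct (gpow_mul_inv_pow (b^-1) n m) as [k E].
      rewrite ginv_inv in E; exists k; tauto.
    + exists (n + m); right; symmetry; apply gpow_add.
  - intros x [n [-> | ->]]; exists n.
    + right; apply ginv_pow.
    + left; now rewrite ginv_pow, ginv_inv.
Qed.

Lemma powers_listed (c : G) m x :
  m <> 0 -> gpow G c m = e -> powers c x -> In x (map (gpow G c) (seq 0 m)).
Proof.
  intros Hm H [n [-> | ->]]; [now apply gpow_mod_listed|].
  rewrite (ginv_as_pow c m Hm H), <- gpow_mul. now apply gpow_mod_listed.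
Qed.

End GroupFacts.

Lemma mod_prime_invertible (p a : nat) :
  prime (Z.of_nat p) -> a mod p <> 0 -> exists b, (a * b) mod p = 1.
Proof.
  intros Hp Ha. pose proof (prime_ge_2 _ Hp).
  assert (Hlt : a mod p < p) by (apply Nat.mod_upper_bound; lia).
  assert (Hr : rel_prime (Z.of_nat (a mod p)) (Z.of_nat p))
    by (apply rel_prime_le_prime; auto; lia).
  destruct (rel_prime_bezout _ _ Hr) as [u v Huv].
  exists (Z.to_nat (u mod Z.of_nat p)). apply Nat2Z.inj.
  rewrite Nat2Z.inj_mod, Nat2Z.inj_mul, Z2Nat.id by (apply Z.mod_pos_bound; lia).
  rewrite Nat2Z.inj_mod in Huv.
  rewrite Zmult_mod_idemp_r, <- Zmult_mod_idemp_l, Z.mul_comm.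
  replace (u * (Z.of_nat a mod Z.of_nat p))%Z with (1 + (-v) * Z.of_nat p)%Z by lia.
  rewrite Z_mod_plus_full. apply Z.mod_1_l. lia.
Qed.

Section CyclicOfPrimeOrder.
Variable G : group.
Local Notation e := (gone G).
Variable p : nat.
Hypothesis Hp : prime (Z.of_nat p).
Variable H : G -> Prop.
Hypothesis HH : cyclic_of_order G H p.

Let p_neq0 : p <> 0.
Proof. pose proof (prime_ge_2 _ Hp); lia. Qed.

Lemma cyclic_pow_order y : H y -> gpow G y p = e.
Proof.
  destruct HH as [g [Hg [Hgp _]]]. intro Hy. apply Hg in Hy as [n ->].
  now rewrite <- gpow_mul, Nat.mul_comm, gpow_mul, Hgp, gpow_one.
Qed.

Lemma cyclic_generated_by h : H h -> h <> e -> forall y, H y -> exists n, y = gpow G h n.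
Proof.
  destruct HH as [g [Hg [Hgp _]]]. intros Hh Hh1 y Hy.
  apply Hg in Hh as [a ->]. apply Hg in Hy as [m ->].
  assert (Ha : a mod p <> 0).
  { intro E. apply Hh1. now rewrite (gpow_mod G g p a), E. }
  destruct (mod_prime_invertible p a Hp Ha) as [b Hb].
  exists (b * m). rewrite <- gpow_mul, Nat.mul_assoc, gpow_mul.
  now rewrite (gpow_mod G g p (a * b)), Hb, gpow_1.
Qed.

Lemma cyclic_listed : exists g, forall y, H y -> In y (map (gpow G g) (seq 0 p)).
Proof.
  destruct HH as [g [Hg [Hgp _]]]. exists g. intros y Hy.
  apply Hg in Hy as [n ->]. now apply gpow_mod_listed.
Qed.

End CyclicOfPrimeOrder.

Section ExtensionByNormalisingElement.
Variable G : group.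
Local Infix "**" := (gmul G) (at level 40, left associativity).
Local Notation e := (gone G).
Local Notation "x ^-1" := (ginv G x) (at level 2).
Variable K : G -> Prop.
Hypothesis HK : subgroup G K.
Variables (c : G) (m : nat).
Hypothesis Hm : m <> 0.
Hypothesis Hcm : gpow G c m = e.
Hypothesis Hnorm : forall y, K y -> K (c ** y ** c^-1).

Definition mul_powers : G -> Prop := fun x => exists y n, K y /\ x = y ** gpow G c n.

Lemma normalised_by_pow n y : K y -> K (gpow G c n ** y ** (gpow G c n)^-1).
Proof.
  revert y; induction n as [|n IH]; intros y Hy; simpl.
  - now rewrite ginv_one, gmul1l, gmul1r.
  - replace (gpow G c n ** c ** y ** (gpow G c n ** c)^-1) with
      (gpow G c n ** (c ** y ** c^-1) ** (gpow G c n)^-1)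
      by now rewrite ginv_mul, !gassoc.
    now apply IH, Hnorm.
Qed.

Lemma mul_powers_subgroup : subgroup G mul_powers.
Proof.
  pose proof HK as [K1 [KM KI]].
  split; [|split].
  - exists e, 0; split; [|simpl; rewrite gmul1l]; auto.
  - intros x1 x2 [y1 [a [Hy1 ->]]] [y2 [b [Hy2 ->]]].
    exists (y1 ** (gpow G c a ** y2 ** (gpow G c a)^-1)), (a + b).
    split; [auto using normalised_by_pow|].
    now rewrite gpow_add, !gassoc, gmulVK.
  - intros x [y [a [Hy ->]]].
    set (b := (m - 1) * a).
    assert (Eb : (gpow G c a)^-1 = gpow G c b).
    { unfold b. now rewrite ginv_pow, (ginv_as_pow G c m), <- gpow_mul, Nat.mul_comm. }
    exists (gpow G c b ** y^-1 ** (gpow G c b)^-1), b.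
    split; [auto using normalised_by_pow|].
    now rewrite ginv_mul, Eb, gmulVK.
Qed.

Lemma mul_powers_listed (l : list G) :
  (forall y, K y -> In y l) ->
  forall x, mul_powers x ->
  In x (flat_map (fun y => map (fun j => y ** gpow G c j) (seq 0 m)) l).
Proof.
  intros Hl x [y [n [Hy ->]]]. apply in_flat_map. exists y. split; auto.
  rewrite (gpow_mod G c m n Hm Hcm).
  apply (in_map (fun j => y ** gpow G c j)), in_seq.
  pose proof (Nat.mod_upper_bound n m Hm); lia.
Qed.

End ExtensionByNormalisingElement.

Section TarskiMonster.
Variable G : group.
Local Infix "**" := (gmul G) (at level 40, left associativity).
Local Notation e := (gone G).
Local Notation "x ^-1" := (ginv G x) (at level 2).
Variable p : nat.
Hypothesis HT : tarski_monster G p.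
Variable K : G -> Prop.
Hypothesis HK : subgroup G K.
Hypothesis HKp : proper_sub G K.
Hypothesis HKn : nontrivial_sub G K.

Let Hp : prime (Z.of_nat p) := proj1 HT.
Let Hinf : infinite_group G := proj1 (proj2 HT).
Let Htarski := proj2 (proj2 HT).

Let p_neq0 : p <> 0.
Proof. pose proof (prime_ge_2 _ Hp); lia. Qed.

Lemma tarski_sub_cyclic : cyclic_of_order G K p.
Proof. now apply Htarski. Qed.

(* Were [<c>] the whole group, the element of order [p] in [K] would be a
   power of [c], so [c], and with it the group, would be finite. *)
Lemma tarski_exponent (c : G) : gpow G c p = e.
Proof.
  destruct (classic (c = e)) as [->|Hc]; [apply gpow_one|].
  assert (Hc1 : powers G c c) by (exists 1; left; now rewrite gpow_1).
  destruct (classic (proper_sub G (powers G c))) as [Hpr|Hnp].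
  - apply (cyclic_pow_order G p (powers G c)); auto.
    apply Htarski; [apply powers_subgroup | auto | now exists c].
  - exfalso. destruct HKn as [k [Hk Hk1]].
    assert (Hkp : gpow G k p = e) by (apply (cyclic_pow_order G p K); auto using tarski_sub_cyclic).
    assert (Hck : powers G c k) by (apply NNPP; intro; apply Hnp; now exists k).
    destruct Hck as [n Hn].
    assert (Hn0 : n <> 0) by (intros ->; destruct Hn; auto).
    assert (Hcn : gpow G c (n * p) = e).
    { rewrite gpow_mul. destruct Hn as [<- | E]; auto.
      apply ginv_eq1. now rewrite !ginv_pow, <- E. }
    apply (infinite_not_listed G (powers G c) (map (gpow G c) (seq 0 (n * p))) Hinf Hnp).
    intros x Hx. apply powers_listed; auto. nia.
Qed.

(* [c] normalises [K = <k>], so [K <c>] is a subgroup with at most [p^2]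
   elements: it is proper, hence cyclic of order [p], hence equal to [K]. *)
Lemma tarski_conj_mem (k c : G) : K k -> k <> e -> K (c ** k ** c^-1) -> K c.
Proof.
  intros Hk Hk1 Hck.
  assert (Hnorm : forall y, K y -> K (c ** y ** c^-1)).
  { intros y Hy.
    destruct (cyclic_generated_by G p Hp K tarski_sub_cyclic k Hk Hk1 y Hy) as [n ->].
    rewrite gconj_pow. now apply subgroup_pow. }
  pose proof (mul_powers_subgroup G K HK c p p_neq0 (tarski_exponent c) Hnorm) as HT'.
  assert (Hk' : mul_powers G K c k) by (exists k, 0; simpl; now rewrite gmul1r).
  destruct (classic (proper_sub G (mul_powers G K c))) as [Hpr|Hnp].
  - assert (Hc : mul_powers G K c c) by (exists e, 1; split; [apply HK|now rewrite gpow_1, gmul1l]).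
    destruct (cyclic_generated_by G p Hp _ (Htarski _ HT' Hpr (ex_intro _ k (conj Hk' Hk1)))
      k Hk' Hk1 c Hc) as [n ->].
    now apply subgroup_pow.
  - exfalso. destruct (cyclic_listed G p Hp K tarski_sub_cyclic) as [g0 Hg0].
    exact (infinite_not_listed G _ _ Hinf Hnp
      (mul_powers_listed G K c p p_neq0 (tarski_exponent c) _ Hg0)).
Qed.

End TarskiMonster.

Section SchreierGraph.
Variable G : group.
Local Infix "**" := (gmul G) (at level 40, left associativity).
Local Notation e := (gone G).
Local Notation "x ^-1" := (ginv G x) (at level 2).
Variable K : G -> Prop.
Hypothesis HK : subgroup G K.
Variable X : list G.
Hypothesis HX : generates G X.

Local Notation V := (SchV K).
Local Notation Ed := (SchE K X).
Local Notation Lab := (Label G X).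

Lemma SchV_eq (u v : V) : proj1_sig u = proj1_sig v -> u = v.
Proof. destruct u, v; simpl; intros ->; f_equal; apply proof_irrelevance. Qed.

Lemma Label_eq (a b : Lab) : proj1_sig a = proj1_sig b -> a = b.
Proof. destruct a, b; simpl; intros ->; f_equal; apply proof_irrelevance. Qed.

Definition vtx (g : G) : V := exist _ (rcoset G K g) (ex_intro _ g eq_refl).

Lemma vtx_surj (v : V) : exists g, v = vtx g.
Proof. destruct v as [S [g E]]; exists g; now apply SchV_eq. Qed.

Lemma vact_vtx g s : vact (vtx g) s = vtx (g ** s).
Proof.
  apply SchV_eq; simpl.
  apply functional_extensionality; intro y; apply propositional_extensionality.
  unfold vset, rcoset; simpl; split.
  - intros [z [[k [Hk ->]] ->]]; exists k; split; auto; now rewrite gassoc.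
  - intros [k [Hk ->]]; exists (k ** g); split; [now exists k|].
    now rewrite gassoc.
Qed.

Lemma vtx_eq g1 g2 : vtx g1 = vtx g2 <-> K (g1 ** g2^-1).
Proof.
  pose proof HK as [K1 [KM KI]]. split; intro H.
  - apply (f_equal (@proj1_sig _ _)) in H; simpl in H.
    assert (Hg : rcoset G K g2 g1) by (rewrite <- H; exists e; now rewrite gmul1l).
    destruct Hg as [k [Hk ->]]. now rewrite gmulKV.
  - apply SchV_eq; simpl.
    apply functional_extensionality; intro y; apply propositional_extensionality.
    unfold rcoset; split; intros [k [Hk ->]].
    + exists (k ** (g1 ** g2^-1)); split; auto. now rewrite !gassoc, gmulVK.
    + exists (k ** (g1 ** g2^-1)^-1); split; auto.
      now rewrite ginv_mul, ginv_inv, !gassoc, gmulVK.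
Qed.

Fixpoint walk (v : V) (L : list Lab) : V :=
  match L with [] => v | a :: L' => walk (vact v (proj1_sig a)) L' end.

Fixpoint word_val (L : list Lab) : G :=
  match L with [] => e | a :: L' => proj1_sig a ** word_val L' end.

Lemma walk_vtx g L : walk (vtx g) L = vtx (g ** word_val L).
Proof.
  revert g; induction L as [|a L IH]; intro g; simpl.
  - now rewrite gmul1r.
  - now rewrite vact_vtx, IH, gassoc.
Qed.

Lemma walk_val1 v L : word_val L = e -> walk v L = v.
Proof.
  intro H. destruct (vtx_surj v) as [g ->]. now rewrite walk_vtx, H, gmul1r.
Qed.

Lemma word_val_app L1 L2 : word_val (L1 ++ L2) = word_val L1 ** word_val L2.
Proof.
  induction L1 as [|a L1 IH]; simpl; [now rewrite gmul1l|]. now rewrite IH, gassoc.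
Qed.

Definition label_inv (a : Lab) : Lab :=
  exist _ ((proj1_sig a)^-1) (is_label_inv K (proj2_sig a)).

Lemma word_val_inv L : word_val (rev (map label_inv L)) = (word_val L)^-1.
Proof.
  induction L as [|a L IH]; simpl; [symmetry; apply ginv_one|].
  now rewrite word_val_app, IH, ginv_mul; simpl; rewrite gmul1r.
Qed.

Lemma word_val_surj g : exists L, word_val L = g.
Proof.
  apply (HX (fun g => exists L, word_val L = g)).
  - split; [|split].
    + now exists [].
    + intros a b [L1 <-] [L2 <-]. exists (L1 ++ L2); apply word_val_app.
    + intros a [L <-]. exists (rev (map label_inv L)); apply word_val_inv.
  - intros x Hx. exists [exist _ x (or_introl Hx) : Lab]; simpl; apply gmul1r.
Qed.

Lemma walk_surj (u v : V) : exists L, walk u L = v.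
Proof.
  destruct (vtx_surj u) as [g ->], (vtx_surj v) as [h ->].
  destruct (word_val_surj (g^-1 ** h)) as [L HL].
  exists L. now rewrite walk_vtx, HL, gassoc, gmulVr, gmul1l.
Qed.

Definition dec_prop (P : Prop) : {P} + {~ P} := excluded_middle_informative P.

Definition labels : list Lab :=
  flat_map (fun x => match dec_prop (is_label G X x) with
                     | left H => [exist _ x H] | right _ => [] end)
    (X ++ map (ginv G) X).

Lemma labels_all (a : Lab) : In a labels.
Proof.
  destruct a as [x Hx]. apply in_flat_map. exists x. split.
  - apply in_or_app. destruct Hx as [H|H]; [now left | right].
    rewrite <- (ginv_inv G x). now apply in_map.
  - destruct (dec_prop (is_label G X x)) as [H|H]; [|tauto].
    left; f_equal; apply proof_irrelevance.
Qed.

Fixpoint words (n : nat) : list (list Lab) :=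
  match n with
  | 0 => [[]]
  | S n => flat_map (fun L => map (fun a => a :: L) labels) (words n)
  end.

Lemma in_words L n : In L (words n) <-> length L = n.
Proof.
  revert L; induction n as [|n IH]; intro L; simpl.
  - split; [now intros [<-|[]]|]. destruct L; [now left|discriminate].
  - rewrite in_flat_map. split.
    + intros [L' [H1 H2]]. apply in_map_iff in H2 as [a [<- _]].
      simpl; f_equal; now apply IH.
    + destruct L as [|a L]; [discriminate|]. intro H; injection H as H.
      exists L; split; [now apply IH|]. apply (in_map (fun b => b :: L)), labels_all.
Qed.

(* The labels read along the image under [fE] of the walk from [v] along [L]. *)
Definition transport (fE : Ed -> Ed) := fix tr (v : V) (L : list Lab) : list Lab :=
  match L with
  | [] => []
  | a :: L' => snd (fE (v, a)) :: tr (vact v (proj1_sig a)) L'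
  end.

Lemma transport_length fE v L : length (transport fE v L) = length L.
Proof. revert v; induction L; simpl; auto. Qed.

Section Automorphism.
Variables (fV : V -> V) (fE : Ed -> Ed).
Hypothesis Haut : is_aut fV fE.

Lemma transport_walk v L : fV (walk v L) = walk (fV v) (transport fE v L).
Proof.
  destruct Haut as [_ [_ Ha]]. revert v; induction L as [|a L IH]; intro v; simpl; auto.
  rewrite IH. f_equal. destruct (Ha (v, a)) as [Ho [Ht _]].
  unfold e_ter, e_org in *; simpl in *. now rewrite <- Ht, Ho.
Qed.

Lemma transport_inj v : Injective (transport fE v).
Proof.
  destruct Haut as [_ [[gE [HgE _]] Ha]].
  intros L1; revert v; induction L1 as [|a L1 IH]; intros v [|b L2]; simpl;
    try discriminate; auto.
  intro H; injection H as H1 H2.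
  assert (Hab : (v, a) = (v, b) :> Ed).
  { rewrite <- (HgE (v, a)), <- (HgE (v, b)). f_equal.
    destruct (Ha (v, a)) as [Ho1 _], (Ha (v, b)) as [Ho2 _].
    unfold e_org in *; simpl in *.
    destruct (fE (v, a)), (fE (v, b)); simpl in *; now subst. }
  injection Hab as ->. f_equal. now apply (IH (vact v (proj1_sig b))).
Qed.

Lemma transport_label_preserving v L : label_preserving fE -> transport fE v L = L.
Proof.
  intro Hl. revert v; induction L as [|a L IH]; intro v; simpl; auto.
  rewrite IH. f_equal. apply Label_eq, (Hl (v, a)).
Qed.

Lemma aut_inverse : exists gV (gE : Ed -> Ed), is_aut gV gE /\ forall v, gV (fV v) = v.
Proof.
  destruct Haut as [[gV [HV1 HV2]] [[gE [HE1 HE2]] Ha]]. exists gV, gE.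
  split; auto. split; [now exists fV|]. split; [now exists fE|].
  intro ed. destruct (Ha (gE ed)) as [Ho [Ht Hi]]. rewrite HE2 in Ho, Ht, Hi.
  split; [|split].
  - now rewrite Ho, HV1.
  - now rewrite Ht, HV1.
  - now rewrite <- Hi, HE1.
Qed.

(* The words of value [e] are closed at every vertex, so an injection of the
   closed words at [u] into those at [fV u] cannot avoid the others. *)
Lemma aut_nontrivial_loop u L0 :
  walk u L0 = u -> word_val L0 <> e ->
  exists L, length L = length L0 /\ walk (fV u) L = fV u /\ word_val L <> e.
Proof.
  intros HL0 HL0e. apply NNPP; intro Hno.
  assert (Hall : forall L, length L = length L0 -> walk (fV u) L = fV u -> word_val L = e).
  { intros L H1 H2. apply NNPP; intro H3. apply Hno; now exists L. }
  set (A := nodup (fun x y : list Lab => dec_prop (x = y))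
    (filter (fun L => if dec_prop (walk u L = u) then true else false) (words (length L0)))).
  assert (inA : forall L, In L A <-> length L = length L0 /\ walk u L = u).
  { intro L. unfold A. rewrite nodup_In, filter_In, in_words.
    destruct (dec_prop (walk u L = u)); intuition discriminate. }
  assert (Htr : forall L, In L A -> word_val (transport fE u L) = e).
  { intros L HL. apply inA in HL as [Hl Hw]. apply Hall.
    - now rewrite transport_length.
    - now rewrite <- transport_walk, Hw. }
  assert (Hnd : NoDup (L0 :: map (transport fE u) A)).
  { constructor.
    - intro H. apply in_map_iff in H as [L [HL HLA]].
      apply HL0e. rewrite <- HL. now apply Htr.
    - apply Injective_map_NoDup; [apply transport_inj | apply NoDup_nodup]. }
  assert (Hinc : incl (L0 :: map (transport fE u) A) A).
  { intros L [<- | HL]; [now apply inA|].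
    apply in_map_iff in HL as [M [<- HM]]. apply inA. split.
    - rewrite transport_length. now apply inA.
    - now apply walk_val1, Htr. }
  pose proof (NoDup_incl_length Hnd Hinc) as H. simpl in H.
  rewrite length_map in H. lia.
Qed.

End Automorphism.

End SchreierGraph.

Lemma vertex_transitive_almost_transitive (G : group) (K : G -> Prop) (X : list G) :
  vertex_transitive G K X -> almost_transitive G K X.
Proof.
  intro Hvt. exists [vtx G K (gone G)]. intro v.
  destruct (Hvt v (vtx G K (gone G))) as [fV [fE [Ha Hf]]].
  exists fV, fE. split; auto. rewrite Hf; now left.
Qed.

Lemma almost_transitive_finite (G : group) (K : G -> Prop) (X : list G) :
  almost_transitive G K X -> (forall v : SchV K, aut_orbit_finite X v) ->
  exists l, forall v : SchV K, In v l.
Proof.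
  intros [V0 HV0] Horb.
  destruct (choice (fun u l => forall fV fE, is_aut fV fE -> In (fV u) l) Horb) as [O HO].
  exists (flat_map O V0). intro v. destruct (HV0 v) as [fV [fE [Haut Hin]]].
  destruct (aut_inverse G K X fV fE Haut) as [gV [gE [Hg Hgf]]].
  apply in_flat_map. exists (fV v). split; auto.
  pose proof (HO (fV v) gV gE Hg) as H. now rewrite Hgf in H.
Qed.

Section TarskiSchreierGraph.
Variable G : group.
Local Infix "**" := (gmul G) (at level 40, left associativity).
Local Notation e := (gone G).
Local Notation "x ^-1" := (ginv G x) (at level 2).
Variable p : nat.
Hypothesis HT : tarski_monster G p.
Variable K : G -> Prop.
Hypothesis HK : subgroup G K.
Hypothesis HKp : proper_sub G K.
Hypothesis HKn : nontrivial_sub G K.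
Variable X : list G.
Hypothesis HX : generates G X.

Local Notation V := (SchV K).
Local Notation Ed := (SchE K X).
Local Notation vtx := (vtx G K).
Local Notation walk := (walk G K X).
Local Notation word_val := (word_val G X).

(* [L] is closed at [Kg] iff [g L g^-1] lies in [K]; conjugating one such
   element into another by [g g'^-1] forces [Kg = Kg'] by [tarski_conj_mem]. *)
Lemma closed_walk_unique u u' L :
  walk u L = u -> walk u' L = u' -> word_val L <> e -> u = u'.
Proof.
  intros H1 H2 Hn.
  destruct (vtx_surj G K u) as [g ->], (vtx_surj G K u') as [g' ->].
  rewrite walk_vtx in H1, H2. apply vtx_eq in H1, H2; auto. apply vtx_eq; auto.
  apply (tarski_conj_mem G p HT K HK HKp HKn (g' ** word_val L ** g'^-1)); auto.
  - intro E. now apply Hn, (gconj_eq1 G g').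
  - now rewrite ginv_mul, ginv_inv, !gassoc, !gmulVK.
Qed.

Lemma base_loop : exists L0, walk (vtx e) L0 = vtx e /\ word_val L0 <> e.
Proof.
  destruct HKn as [k [Hk Hk1]]. destruct (word_val_surj G K X HX k) as [L0 HL].
  exists L0. rewrite walk_vtx, HL, gmul1l. split; auto.
  apply vtx_eq; auto. now rewrite ginv_one, gmul1r.
Qed.

Lemma label_preserving_aut_trivial (fV : V -> V) (fE : Ed -> Ed) :
  is_aut fV fE -> label_preserving fE -> (forall v, fV v = v) /\ (forall ed, fE ed = ed).
Proof.
  intros Haut Hl. destruct base_loop as [L0 [HL0 HL0e]].
  assert (Hb : fV (vtx e) = vtx e).
  { apply (closed_walk_unique _ _ L0); auto.
    now rewrite <- (transport_label_preserving G K X fE (vtx e) L0 Hl),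
      <- transport_walk, HL0. }
  assert (Hv : forall v, fV v = v).
  { intro v. destruct (walk_surj G K X HX (vtx e) v) as [L <-].
    now rewrite (transport_walk G K X fV fE), transport_label_preserving, Hb. }
  split; auto. intros [v a].
  destruct Haut as [_ [_ Ha]]. destruct (Ha (v, a)) as [Ho _].
  pose proof (Hl (v, a)) as Hla. unfold e_org, e_label in *; simpl in *.
  destruct (fE (v, a)) as [v' a']; simpl in *.
  rewrite Ho, Hv. f_equal. now apply Label_eq.
Qed.

(* By [closed_walk_unique], each word of non-trivial value contributes at
   most one vertex. *)
Definition loop_vertices (n : nat) : list V :=
  flat_map (fun L => match dec_prop (exists u, walk u L = u /\ word_val L <> e) with
    | left H => [proj1_sig (constructive_indefinite_description _ H)]
    | right _ => [] end) (words G X n).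

Lemma in_loop_vertices u L :
  walk u L = u -> word_val L <> e -> In u (loop_vertices (length L)).
Proof.
  intros H1 H2. apply in_flat_map. exists L. split; [now apply in_words|].
  destruct (dec_prop (exists u, walk u L = u /\ word_val L <> e)) as [H|H].
  - destruct (constructive_indefinite_description _ H) as [u' [Hu' Hu'']]; simpl.
    left. now apply (closed_walk_unique _ _ L).
  - exfalso; apply H; eauto.
Qed.

Lemma tarski_aut_orbit_finite (v : V) : aut_orbit_finite X v.
Proof.
  destruct base_loop as [L0 [HL0 HL0e]].
  destruct (walk_surj G K X HX (vtx e) v) as [Lv <-].
  exists (flat_map (fun u => map (fun L => walk u L) (words G X (length Lv)))
            (loop_vertices (length L0))).
  intros fV fE Haut. apply in_flat_map. exists (fV (vtx e)). split.
  - destruct (aut_nontrivial_loop G K X fV fE Haut _ L0 HL0 HL0e) as [L [Hl [Hw He]]].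
    rewrite <- Hl. now apply in_loop_vertices.
  - rewrite (transport_walk G K X fV fE) by auto.
    apply (in_map (fun L => walk _ L)), in_words, transport_length.
Qed.

Lemma tarski_vertices_infinite : ~ exists l, forall v : V, In v l.
Proof.
  intros [l Hl].
  destruct (cyclic_listed G p (proj1 HT) K (tarski_sub_cyclic G p HT K HK HKp HKn))
    as [g0 Hg0].
  destruct (choice (fun u g => u = vtx g) (vtx_surj G K)) as [rep Hrep].
  apply (proj1 (proj2 HT)).
  exists (flat_map (fun u => map (fun y => y ** rep u) (map (gpow G g0) (seq 0 p))) l).
  intro g. apply in_flat_map. exists (vtx g). split; auto.
  assert (Hk : K (g ** (rep (vtx g))^-1)) by (apply vtx_eq; auto).
  rewrite <- (gmulVK G g (rep (vtx g))) at 1.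
  apply (in_map (fun y => y ** rep (vtx g))). now apply Hg0.
Qed.

Lemma tarski_not_almost_transitive : ~ almost_transitive G K X.
Proof.
  intro Hat. apply tarski_vertices_infinite.
  exact (almost_transitive_finite G K X Hat tarski_aut_orbit_finite).
Qed.

End TarskiSchreierGraph.

Theorem proposition6p8 (G : group) (p : nat) (HT : tarski_monster G p)
  (X : list G) (HX : generates G X)
  (K : G -> Prop) (HK : subgroup G K) (HKp : proper_sub G K)
  (HKn : nontrivial_sub G K) :
  (forall (fV : SchV K -> SchV K) (fE : SchE K X -> SchE K X),
      @is_aut G K X fV fE -> @label_preserving G K X fE ->
      (forall v, fV v = v) /\ (forall e, fE e = e)) /\
  (forall v : SchV K, @aut_orbit_finite G K X v) /\
  ~ @almost_transitive G K X /\
  strongly_simple G.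
Proof.
  split; [|split; [|split]].
  - exact (label_preserving_aut_trivial G p HT K HK HKp HKn X HX).
  - exact (tarski_aut_orbit_finite G p HT K HK HKp HKn X HX).
  - exact (tarski_not_almost_transitive G p HT K HK HKp HKn X HX).
  - split; [now exists X|].
    intros r _ X' _ HX' _ H HH HHp HHn Hvt.
    apply (tarski_not_almost_transitive G p HT H HH HHp HHn X' HX').
    now apply vertex_transitive_almost_transitive.
Qed.
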